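(* Let $\alpha\in\mathbb{R}$, $\lambda>0$ and $E\in\mathbb{R}$. For every even $k\in 2\mathbb{N}$ there exists a polynomial $R_{k/2}$ of degree $k/2$ such that $$P_k(\theta)=R_{k/2}\Big(\cos 2\pi\big(\theta+(\tfrac k2-1)\alpha\big)\Big)\quad\text{for all }\theta\in\mathbb{T}.$$
   Context: $\mathbb{T}=\mathbb{R}/\mathbb{Z}$. For $\theta\in\mathbb{T}$, $n\in\mathbb{Z}$ put $v(\theta,n)=\cos2\pi((n-1)\alpha+\theta)$ if $n$ is odd and $v(\theta,n)=\cos 2\pi(n\alpha+\theta)$ if $n$ is even; $c(\theta,n)=\lambda$ if $n$ is odd and $c(\theta,n)=\cos2\pi(n\alpha+\theta)$ if $n$ is even. Let $\mathcal{H}_\theta$ be the tridiagonal operator on $\ell^2(\mathbb{Z})$ given by $(\mathcal{H}_\theta u)(n)=c(\theta,n)u(n+1)+c(\theta,n-1)u(n-1)+v(\theta,n)u(n)$. $P_k(\theta)=\det\big[(\mathcal{H}_\theta-E)|_{[0,k-1]}\big]$ denotes the determinant of the $k\times k$ matrix $\big(\langle\delta_m,(\mathcal{H}_\theta-E)\delta_n\rangle\big)_{m,n=0}^{k-1}$ (the restriction to $\{0,\dots,k-1\}$ with Dirichlet boundary conditions). *)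

From HB Require Import structures.
From mathcomp Require Import all_boot all_order all_algebra.
From mathcomp Require Import all_classical all_reals all_analysis.
Set Implicit Arguments. Unset Strict Implicit. Unset Printing Implicit Defensive.
Import Order.TTheory GRing.Theory Num.Theory.
Local Open Scope ring_scope.

Section Defs.
Variable R : realType.

Definition vpot (alpha theta : R) (n : int) : R :=
  if odd `|n|%N then cos (2 * pi * ((n - 1)%:~R * alpha + theta))
  else cos (2 * pi * (n%:~R * alpha + theta)).

Definition chop (lambda alpha theta : R) (n : int) : R :=
  if odd `|n|%N then lambda else cos (2 * pi * (n%:~R * alpha + theta)).

Definition Hop (alpha lambda theta : R) (u : int -> R) (n : int) : R :=
  chop lambda alpha theta n * u (n + 1)
  + chop lambda alpha theta (n - 1) * u (n - 1)
  + vpot alpha theta n * u n.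

Definition delta (m : int) : int -> R := fun n => (n == m)%:R.

(* P_k(theta) = det of (H_theta - E) restricted to {0,...,k-1}:
   entry (m,n) = <delta_m, (H_theta - E) delta_n> *)
Definition Pk (alpha lambda E : R) (k : nat) (theta : R) : R :=
  \det (\matrix_(i < k, j < k)
          (Hop alpha lambda theta (delta (j : nat)%:Z) (i : nat)%:Z
           - E * delta (j : nat)%:Z (i : nat)%:Z)).
End Defs.

(* Write x_m = cos 2pi(2m alpha + theta): it is the potential at the sites 2m and 2m+1
   and the hopping between them, while the hopping between 2m+1 and 2m+2 is lambda.
   Expanding the tridiagonal determinants twice gives, for the minors D_j of size j,
     D_(2m+2) = (E^2 - 2E x_m) D_(2m) + lambda^2 (E - x_m) D_(2m-1),
     D_(2m+1) = (x_m - E) D_(2m) - lambda^2 D_(2m-1),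
   so if x_m = cos (t + beta_m), both D_(2m) and D_(2m-1) are trigonometric polynomials
   of degree m in t.  With t = 2pi(theta + (k/2 - 1) alpha) the phases satisfy
   beta_(k/2-1-m) = - beta_m, so reversing the order of the sites turns t into -t:
   P_k is an even trigonometric polynomial of degree k/2 in t, i.e. a polynomial of
   degree k/2 in cos t. *)

From HB Require Import structures.
From mathcomp Require Import all_boot all_order all_algebra.
From mathcomp Require Import all_classical all_reals all_analysis.
From mathcomp Require Import zify ring lra.
Set Implicit Arguments.
Unset Strict Implicit.
Unset Printing Implicit Defensive.
Import Order.TTheory GRing.Theory Num.Theory.
Local Open Scope ring_scope.

Section LeadMinor.
Variable R : comPzRingType.
Implicit Types (M : nat -> nat -> R) (d b : nat -> R).

Lemma signr_addnn n : (-1) ^+ (n + n) = 1 :> R.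
Proof. by rewrite -signr_odd addnn odd_double. Qed.

Definition lead_minor M k := \det (\matrix_(i < k, j < k) M i j).

Lemma lead_minor0 M : lead_minor M 0 = 1.
Proof. exact: det_mx00. Qed.

Lemma lead_minor1 M : lead_minor M 1 = M 0 0.
Proof. by rewrite /lead_minor det_mx11 mxE. Qed.

Lemma eq_lead_minor n M M' :
  (forall i j, (i < n)%N -> (j < n)%N -> M i j = M' i j) ->
  lead_minor M n = lead_minor M' n.
Proof. by move=> eqM; congr (\det _); apply/matrixP => i j; rewrite !mxE eqM. Qed.

Lemma lead_minor_rev n M :
  lead_minor (fun i j => M (n.-1 - i)%N (n.-1 - j)%N) n = lead_minor M n.
Proof.
rewrite /lead_minor; pose s := perm.perm (@rev_ord_inj n).
have -> : \matrix_(i < n, j < n) M (n.-1 - i)%N (n.-1 - j)%N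
          = row_perm s (col_perm s (\matrix_(i < n, j < n) M i j)).
  apply/matrixP => i j; rewrite !mxE !perm.permE /=.
  by congr M; lia.
rewrite row_permE col_permE !det_mulmx !det_perm perm.odd_permV.
by rewrite mulrCA -signr_addb addbb mulr1.
Qed.

Lemma submx_lead_minor k M :
  row' ord_max (col' ord_max (\matrix_(i < k.+1, j < k.+1) M i j))
  = \matrix_(i < k, j < k) M i j.
Proof. by apply/matrixP => i j; rewrite !mxE !lift_max. Qed.

Lemma det_minor_subdiag k M :
  (forall i j, (i.+1 < j)%N -> M i j = 0) ->
  \det (row' ord_max (col' (widen_ord (leqnSn k.+1) ord_max)
                            (\matrix_(i < k.+2, j < k.+2) M i j)))
  = M k k.+1 * lead_minor M k.
Proof.
have lift_subdiag (i : 'I_k) :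
    lift (widen_ord (leqnSn k.+1) ord_max) (lift ord_max i) = i :> nat.
  by rewrite /= /bump [(k <= i)%N]leqNgt ltn_ord /= [(k <= i)%N]leqNgt ltn_ord.
move=> M_up; rewrite (expand_det_col _ ord_max) big_ord_recr big1 /= => [|i _].
  rewrite add0r !mxE /cofactor.
  have -> : row' ord_max (col' ord_max (row' ord_max
                (col' (widen_ord (leqnSn k.+1) ord_max) (\matrix_(i, j) M i j))))
            = \matrix_(i < k, j < k) M i j.
    by apply/matrixP => i j; rewrite !mxE !lift_max lift_subdiag.
  by rewrite lift_max /= /bump leqnn signr_addnn mul1r.
rewrite !mxE /= /bump ltnNge (ltnW (ltn_ord i)) leqnn M_up ?mul0r //.
exact: ltn_ord.
Qed.

Lemma lead_minorSS k M :
  (forall i j, (i.+1 < j)%N -> M i j = 0) ->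
  (forall i j, (j.+1 < i)%N -> M i j = 0) ->
  lead_minor M k.+2
  = M k.+1 k.+1 * lead_minor M k.+1 - M k.+1 k * M k k.+1 * lead_minor M k.
Proof.
move=> M_up M_low; rewrite [LHS](expand_det_row _ ord_max).
rewrite big_ord_recr big_ord_recr big1 /= => [|i _]; last first.
  by rewrite mxE M_low ?mul0r //= ltnS.
rewrite add0r !mxE /cofactor submx_lead_minor det_minor_subdiag //.
rewrite -/(lead_minor M k.+1) /= addSn exprS !signr_addnn.
ring.
Qed.

Definition tridiag d b i j : R :=
  if i == j then d i
  else if j == i.+1 then b i
  else if i == j.+1 then b j
  else 0.

Lemma lead_minor_tridiagSS k d b :
  lead_minor (tridiag d b) k.+2
  = d k.+1 * lead_minor (tridiag d b) k.+1 - b k ^+ 2 * lead_minor (tridiag d b) k.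
Proof.
have tridiag_band i j : (i.+1 < j)%N || (j.+1 < i)%N -> tridiag d b i j = 0.
  by move=> band; rewrite /tridiag; do !case: eqP => [?|_] //; lia.
have tridiag_sub : tridiag d b k.+1 k = b k.
  by rewrite /tridiag; do !case: eqP => [?|_] //; lia.
have tridiag_sup : tridiag d b k k.+1 = b k.
  by rewrite /tridiag; do !case: eqP => [?|_] //; lia.
rewrite lead_minorSS ?tridiag_sub ?tridiag_sup; last 2 first.
- by move=> i j ij; rewrite tridiag_band ?ij.
- by move=> i j ij; rewrite tridiag_band ?ij ?orbT.
by rewrite /tridiag eqxx expr2.
Qed.

Lemma lead_minor_tridiag_rev n d b :
  lead_minor (tridiag d b) n
  = lead_minor (tridiag (fun i => d (n.-1 - i)%N) (fun i => b (n.-2 - i)%N)) n.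
Proof.
rewrite -lead_minor_rev; apply: eq_lead_minor => i j ltin ltjn; rewrite /tridiag.
have -> : (n.-1 - i == n.-1 - j)%N = (i == j) by apply/eqP/eqP; lia.
have -> : (n.-1 - j == (n.-1 - i).+1)%N = (i == j.+1) by apply/eqP/eqP; lia.
have -> : (n.-1 - i == (n.-1 - j).+1)%N = (j == i.+1) by apply/eqP/eqP; lia.
by do !case: eqP => ? //; try (exfalso; lia); congr b; lia.
Qed.

Lemma eq_lead_minor_tridiag n d d' b b' :
  (forall i, (i < n)%N -> d i = d' i) -> (forall i, (i.+1 < n)%N -> b i = b' i) ->
  lead_minor (tridiag d b) n = lead_minor (tridiag d' b') n.
Proof.
move=> eq_d eq_b; apply: eq_lead_minor => i j ltin ltjn; rewrite /tridiag.
by do !case: eqP => [?|_]; subst; rewrite ?eq_d ?eq_b.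
Qed.
End LeadMinor.

Section TrigPoly.
Variable R : realType.
Implicit Types (d : nat) (g h : R -> R).

Definition trigpoly d g := exists A B : {poly R},
  [/\ (size A <= d.+1)%N, (size B <= d)%N &
      forall t, g t = A.[cos t] + sin t * B.[cos t]].

Lemma trigpoly_cst c : trigpoly 0 (fun=> c).
Proof.
exists c%:P, 0; split; first by rewrite size_polyC leq_b1.
  by rewrite size_poly0.
by move=> t; rewrite hornerC horner0 mulr0 addr0.
Qed.

Lemma eq_trigpoly d g h : trigpoly d g -> g =1 h -> trigpoly d h.
Proof. by move=> [A [B [szA szB eg]]] eq_gh; exists A, B; split=> // t; rewrite -eq_gh. Qed.

Lemma trigpolyD d g h : trigpoly d g -> trigpoly d h -> trigpoly d (fun t => g t + h t).
Proof.
move=> [A1 [B1 [szA1 szB1 eg]]] [A2 [B2 [szA2 szB2 eh]]].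
exists (A1 + A2), (B1 + B2); split.
- by rewrite (leq_trans (size_polyD _ _)) // geq_max szA1 szA2.
- by rewrite (leq_trans (size_polyD _ _)) // geq_max szB1 szB2.
- by move=> t; rewrite eg eh !hornerD; ring.
Qed.

Lemma trigpolyMcos d g a b beta : trigpoly d g ->
  trigpoly d.+1 (fun t => (a + b * cos (t + beta)) * g t).
Proof.
move=> [A [B [szA szB eg]]].
pose L := a%:P + (b * cos beta) *: 'X.
have szL : (size L <= 2)%N.
  rewrite (leq_trans (size_polyD _ _)) // geq_max size_polyC (leq_trans (leq_b1 _)) //=.
  by rewrite (leq_trans (size_scale_leq _ _)) // size_polyX.
have szQ : (size (1 - 'X^2 : {poly R})%R <= 3)%N.
  by rewrite (leq_trans (size_polyD _ _)) // geq_max size_polyN size_polyXn size_poly1.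
have szM (p q : {poly R}) (m n : nat) : (size p <= m)%N -> (size q <= n)%N ->
    (size (p * q)%R <= (m + n).-1)%N.
  by move=> szp szq; apply: leq_trans (size_polyMleq _ _) _; lia.
exists (L * A - (b * sin beta) *: ((1 - 'X^2) * B)), (L * B - (b * sin beta) *: A); split.
- rewrite (leq_trans (size_polyD _ _)) // geq_max size_polyN (szM _ _ _ _ szL szA) /=.
  by rewrite (leq_trans (size_scale_leq _ _)) // (szM _ _ _ _ szQ szB).
- rewrite (leq_trans (size_polyD _ _)) // geq_max size_polyN (szM _ _ _ _ szL szB) /=.
  by rewrite (leq_trans (size_scale_leq _ _)) // ltnW.
- move=> t; rewrite eg cosD /L !hornerE -sin2cos2 /=; ring.
Qed.

Lemma trigpoly_even d g : trigpoly d g -> (forall t, g (- t) = g t) ->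
  exists A : {poly R}, (size A <= d.+1)%N /\ forall t, g t = A.[cos t].
Proof.
move=> [A [B [szA _ eg]]] g_even; exists A; split => // t.
have := eg (- t); rewrite g_even cosN sinN eg; lra.
Qed.
End TrigPoly.

Section Minors.
Variables (R : comPzRingType) (lam E : R).
Implicit Types (x : nat -> R).

Definition Hmx x :=
  tridiag (fun i => x i./2 - E) (fun i => if odd i then lam else x i./2).

Definition even_minor x m := lead_minor (Hmx x) m.*2.

(* The minor of size 2m - 1; taking 0 rather than 1 at m = 0 makes odd_minorS hold there. *)
Definition odd_minor x m := if m is m'.+1 then lead_minor (Hmx x) m'.*2.+1 else 0.

Lemma odd_minorS x m :
  odd_minor x m.+1 = (x m - E) * even_minor x m - lam ^+ 2 * odd_minor x m.
Proof.
case: m => [|m]; rewrite /odd_minor /even_minor.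
  by rewrite lead_minor1 lead_minor0 /Hmx /tridiag eqxx mulr1 mulr0 subr0.
by rewrite doubleS lead_minor_tridiagSS /= half_double odd_double.
Qed.

Lemma even_minorS x m :
  even_minor x m.+1
  = (E ^+ 2 - 2 * E * x m) * even_minor x m + lam ^+ 2 * (E - x m) * odd_minor x m.
Proof.
rewrite {1}/even_minor doubleS lead_minor_tridiagSS.
rewrite -[lead_minor _ m.*2.+1]/(odd_minor x m.+1).
rewrite odd_minorS /= uphalf_double half_double odd_double -/(even_minor x m); ring.
Qed.

Lemma even_minor_rev n x y : (forall m, (m < n)%N -> y m = x (n.-1 - m)%N) ->
  even_minor y n = even_minor x n.
Proof.
move=> y_rev; rewrite /even_minor [RHS]lead_minor_tridiag_rev.
apply: eq_lead_minor_tridiag => i lt_i_n.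
  by rewrite y_rev; [congr (x _ - E)|]; lia.
have -> : odd (n.*2.-2 - i) = odd i by lia.
by case: ifP => // i_even; rewrite y_rev; [congr x|]; lia.
Qed.
End Minors.

Lemma trigpoly_minors (R : realType) (lam E : R) (beta : nat -> R) m :
  trigpoly m (fun t => even_minor lam E (fun i => cos (t + beta i)) m) /\
  trigpoly m (fun t => odd_minor lam E (fun i => cos (t + beta i)) m).
Proof.
elim: m => [|m [IHeven IHodd]].
  split; last exact: trigpoly_cst.
  by apply: (eq_trigpoly (trigpoly_cst 1)) => t; rewrite /even_minor lead_minor0.
split.
  apply: (eq_trigpoly (trigpolyD (trigpolyMcos (E ^+ 2) (- (2 * E)) (beta m) IHeven)
                                 (trigpolyMcos (lam ^+ 2 * E) (- lam ^+ 2) (beta m) IHodd))).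
  by move=> t; rewrite even_minorS; ring.
apply: (eq_trigpoly (trigpolyD (trigpolyMcos (- E) 1 (beta m) IHeven)
                               (trigpolyMcos (- lam ^+ 2) 0 (beta m) IHodd))).
by move=> t; rewrite odd_minorS; ring.
Qed.

Section Operator.
Variables (R : realType) (alpha lambda E theta : R).

Definition veven (m : nat) : R := cos (2 * pi * ((m.*2)%:R * alpha + theta)).

Lemma vpot_nat i : vpot alpha theta i%:Z = veven i./2.
Proof.
rewrite /vpot absz_nat /veven; case: ifP => i_odd.
  by rewrite (_ : i%:Z - 1 = (i./2).*2) //; lia.
by rewrite -[in LHS](odd_double_half i) i_odd.
Qed.

Lemma chop_nat i : chop lambda alpha theta i%:Z = if odd i then lambda else veven i./2.
Proof.
rewrite /chop absz_nat /veven; case: ifP => // i_even.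
by rewrite -[in LHS](odd_double_half i) i_even.
Qed.

Lemma Pk_Hmx k : Pk alpha lambda E k theta = lead_minor (Hmx lambda E veven) k.
Proof.
rewrite /Pk /lead_minor; congr (\det _); apply/matrixP => i j; rewrite !mxE.
move: (i : nat) (j : nat) => {i j} i j.
rewrite /Hop /delta /Hmx /tridiag.
have -> : (i%:Z + 1 == j%:Z) = (j == i.+1) by apply/eqP/eqP; lia.
have -> : (i%:Z - 1 == j%:Z) = (i == j.+1) by apply/eqP/eqP; lia.
rewrite eqz_nat chop_nat vpot_nat.
case: (eqVneq i j) => [<-|_].
  by rewrite ltn_eqF // !mulr0n !mulr1n !mulr0 !mulr1 !add0r.
rewrite !mulr0n !mulr0 subr0 addr0; case: (eqVneq j i.+1) => [->|_].
  by rewrite (ltn_eqF (ltnW (ltnSn i.+1))) mulr0n mulr1n mulr0 mulr1 addr0.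
rewrite mulr0n mulr0 add0r.
case: (eqVneq i j.+1) => [->|_]; last by rewrite mulr0n mulr0.
by rewrite (_ : j.+1%:Z - 1 = j%:Z) ?chop_nat ?mulr1 //; lia.
Qed.
End Operator.

Theorem lemma3p14 (R : realType) (alpha lambda E : R) (hlambda : 0 < lambda)
  (k : nat) (hk : ~~ odd k) :
  exists Rp : {poly R},
    (size Rp <= (k./2).+1)%N /\
    forall theta : R,
      Pk alpha lambda E k theta
      = Rp.[cos (2 * pi * (theta + ((k./2)%:R - 1) * alpha))].
Proof.
set n := k./2; have k_double : k = n.*2 by rewrite -[LHS]odd_double_half (negbTE hk).
pose beta m := 2 * pi * (((m.*2)%:R - (n%:R - 1)) * alpha) : R.
pose g t := even_minor lambda E (fun m => cos (t + beta m)) n.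
have natr_double m : (m.*2)%:R = 2 * m%:R :> R by rewrite -mul2n natrM.
have g_even t : g (- t) = g t.
  apply: even_minor_rev => m lt_m_n; rewrite -cosN /beta !natr_double; congr cos.
  have -> : (n.-1 - m)%:R = n%:R - 1 - m%:R :> R by rewrite -subn1 !natrB //; lia.
  by ring.
have [A [szA gA]] := trigpoly_even (trigpoly_minors lambda E beta n).1 g_even.
exists A; split => // theta.
rewrite -gA /g Pk_Hmx k_double /even_minor; congr (lead_minor (Hmx _ _ _) _).
by apply/funext => m; rewrite /veven /beta; congr cos; ring.
Qed.
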